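(* Let $A=KQ/I$ be a gentle algebra over an algebraically closed field $K$. If $Q$ contains a subquiver whose underlying graph is of type $\mathbb{D}_4$, then the trivial extension $T(A)=A\ltimes DA$ is neither a Brauer line algebra nor a Brauer star algebra.
   Context: $D=\mathrm{Hom}_K(-,K)$; $T(A)$ has underlying space $A\oplus DA$ with multiplication $(a,f)(b,g)=(ab,ag+fb)$. Gentle: every vertex of $Q$ has at most two incoming and at most two outgoing arrows; for each arrow $\alpha$ there is at most one arrow $\beta$ with $\alpha\beta\in I$, at most one $\gamma$ with $\gamma\alpha\in I$, at most one $\beta'$ with $\alpha\beta'\notin I$ and at most one $\gamma'$ with $\gamma'\alpha\notin I$ (composable arrows); $I$ is admissible and generated by paths of length 2. $\mathbb{D}_4$ is the star graph with one central vertex and three neighbours. Brauer graph algebras: for a finite connected graph $G$ with multiplicity $m\equiv1$ and a cyclic ordering of edges around each vertex, $Q_G$ has vertices the edges of $G$ and an arrow $i\to j$ when $E_j$ immediately follows $E_i$ in the cyclic order around a common vertex; each vertex $v$ of $G$ of degree $\ge2$ yields an oriented cycle $C_v$; $I_G$ is generated by $C_v-C_{v'}$ for the two cycles at a vertex $i$ of $Q_G$ (where $v,v'$ are the endpoints of $E_i$), $C_v\alpha_1$ for each cycle $C_v=\alpha_1\cdots\alpha_k$ at $i$, and $\alpha\beta$ whenever $\alpha\beta$ lies in no such cycle; $B_G=KQ_G/I_G$. A Brauer line algebra is $B_G$ (with $m\equiv1$) where $G$ is a path graph $\circ-\circ-\cdots-\circ$ with $n$ edges; a Brauer star algebra is $B_G$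 (with $m\equiv1$) where $G$ is a star with $n$ edges all incident to one central vertex, cyclically ordered; equivalently it is the symmetric Nakayama algebra given by an oriented $n$-cycle with relation $\alpha^{n+1}=0$. *)

From HB Require Import structures.
From mathcomp Require Import all_boot all_order all_algebra all_field.
Set Implicit Arguments. Unset Strict Implicit. Unset Printing Implicit Defensive.
Import GRing.Theory.
Local Open Scope ring_scope.

Section Defs.
Variable K : fieldType.

(* Paths are written left to right: the path [:: a1; ...; ak] has
   t a_i = s a_(i+1) and is evaluated as the product x a1 * ... * x ak.    *)

Definition path_eval (B : algType K) (Ar : Type) (x : Ar -> B) (p : seq Ar) : B :=
  \prod_(a <- p) x a.

Definition rel_eval (B : algType K) (Ar : Type) (x : Ar -> B)
    (r : seq (K * seq Ar)) : B :=
  \sum_(c <- r) c.1 *: path_eval x c.2.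

(* e, x satisfy the defining relations of the path algebra KQ:
   complete set of orthogonal idempotents, and a = e_(s a) a e_(t a). *)
Definition quiver_gens (B : algType K) (V Ar : finType) (s t : Ar -> V)
    (e : V -> B) (x : Ar -> B) : Prop :=
  [/\ \sum_(i : V) e i = 1,
      (forall i j : V, e i * e j = if i == j then e i else 0) &
      (forall a : Ar, x a = e (s a) * x a * e (t a))].

Definition rels_hold (B : algType K) (Ar : eqType) (x : Ar -> B)
    (R : seq (seq (K * seq Ar))) : Prop :=
  forall r, r \in R -> rel_eval x r = 0.

Definition alg_hom (B C : algType K) (f : B -> C) : Prop :=
  [/\ (forall (k : K) (u v : B), f (k *: u + v) = k *: f u + f v),
      (forall u v : B, f (u * v) = f u * f v) & f 1 = 1].

(* (B, e, x) is (isomorphic to) K Q / I, where I is the ideal of KQ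
   generated by the relations R: it is the universal algebra generated by
   the vertex idempotents and arrows subject to the relations of KQ and R. *)
Definition presents (B : algType K) (V Ar : finType) (s t : Ar -> V)
    (R : seq (seq (K * seq Ar))) (e : V -> B) (x : Ar -> B) : Prop :=
  [/\ quiver_gens s t e x, rels_hold x R &
      forall (C : algType K) (e' : V -> C) (x' : Ar -> C),
        quiver_gens s t e' x' -> rels_hold x' R ->
        exists! f : B -> C,
          [/\ alg_hom f, (forall i, f (e i) = e' i) & (forall a, f (x a) = x' a)]].

Definition monomial_rels (Ar : Type) (Rq : seq (Ar * Ar)) : seq (seq (K * seq Ar)) :=
  [seq [:: (1, [:: p.1; p.2])] | p <- Rq].

(* A = KQ/I with e, x the images of vertices and arrows, I generated by the
   length-2 paths in Rq, I admissible, and (Q, I) gentle.  A path lies in I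
   iff its image in A = KQ/I is zero.                                       *)
Definition gentle_presentation (A : algType K) (V Ar : finType) (s t : Ar -> V)
    (Rq : seq (Ar * Ar)) (e : V -> A) (x : Ar -> A) : Prop :=
  [/\ presents s t (monomial_rels Rq) e x,
      (forall p, p \in Rq -> t p.1 = s p.2),
      (* admissible: R^m \subseteq I for some m (I \subseteq R^2 holds since
         the generators have length 2) *)
      (exists m : nat, forall p : m.-tuple Ar, path_eval x p = 0),
      (forall v : V, #|[set a | s a == v]| <= 2 /\ #|[set a | t a == v]| <= 2)%N &
      (forall a : Ar,
        [/\ (#|[set b | (t a == s b) && ((x a * x b)%R == 0%R)]| <= 1)%N,
            (#|[set c | (t c == s a) && ((x c * x a)%R == 0%R)]| <= 1)%N,
            (#|[set b | (t a == s b) && ((x a * x b)%R != 0%R)]| <= 1)%N &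
            (#|[set c | (t c == s a) && ((x c * x a)%R != 0%R)]| <= 1)%N])].

Definition has_D4_subquiver (V Ar : finType) (s t : Ar -> V) : Prop :=
  exists (c u1 u2 u3 : V) (a1 a2 a3 : Ar),
    [/\ uniq [:: c; u1; u2; u3],
        (s a1, t a1) = (c, u1) \/ (s a1, t a1) = (u1, c),
        (s a2, t a2) = (c, u2) \/ (s a2, t a2) = (u2, c) &
        (s a3, t a3) = (c, u3) \/ (s a3, t a3) = (u3, c)].

(* D A = Hom_K(A, K); T(A) = A (+) DA with (a,f)(b,g) = (ab, ag + fb),
   where (a g)(y) = g (y a) and (f b)(y) = f (b y). *)
Definition DA (A : falgType K) := 'Hom(A, K^o).

Definition triv_mul (A : falgType K) (p q : A * DA A) : A * DA A :=
  (p.1 * q.1, linfun (fun y : A => q.2 (y * p.1) + p.2 (q.1 * y))).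

Definition iso_triv_ext (A : falgType K) (B : algType K) : Prop :=
  exists phi : A * DA A -> B,
    [/\ bijective phi,
        (forall (k : K) (p q : A * DA A), phi (k *: p + q) = k *: phi p + phi q),
        (forall p q, phi (triv_mul p q) = phi p * phi q) &
        phi (1, 0) = 1].

(* G = path graph with n.+1 edges E_0, ..., E_n (vertices v_0 .. v_(n+1),
   E_i = {v_i, v_(i+1)}); interior vertices v_1 .. v_n have degree 2.
   Q_G: vertices 'I_n.+1 (the edges); arrows (true, i) = a_i : i -> i+1 and
   (false, i) = b_i : i+1 -> i for i : 'I_n.  Cycles: a_i b_i at i and
   b_i a_i at i+1 (from vertex v_(i+1)).                                    *)
Definition line_s n (a : bool * 'I_n) : 'I_n.+1 :=
  if a.1 then widen_ord (leqnSn n) a.2 else lift ord0 a.2.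
Definition line_t n (a : bool * 'I_n) : 'I_n.+1 :=
  if a.1 then lift ord0 a.2 else widen_ord (leqnSn n) a.2.

Definition line_rels n : seq (seq (K * seq (bool * 'I_n))) :=
  (* C_v - C_v' at Q-vertex i+1 = edge with two non-truncated endpoints *)
  [seq [:: (1, [:: (false, i); (true, i)]); (-1, [:: (true, j); (false, j)])]
     | i <- enum 'I_n, j <- [seq j <- enum 'I_n | val j == (val i).+1]]
  ++ [seq [:: (1, [:: (true, i); (false, i); (true, i)])] | i <- enum 'I_n]
  ++ [seq [:: (1, [:: (false, i); (true, i); (false, i)])] | i <- enum 'I_n]
  (* alpha beta lying in no cycle *)
  ++ [seq [:: (1, [:: (true, i); (true, j)])]
     | i <- enum 'I_n, j <- [seq j <- enum 'I_n | val j == (val i).+1]]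
  ++ [seq [:: (1, [:: (false, j); (false, i)])]
     | i <- enum 'I_n, j <- [seq j <- enum 'I_n | val j == (val i).+1]].

Definition brauer_line (B : algType K) : Prop :=
  exists n : nat, exists (e : 'I_n.+1 -> B) (x : bool * 'I_n -> B),
    presents (@line_s n) (@line_t n) (line_rels n) e x.

(* G = star with N = n.+2 edges E_0 .. E_(N-1), cyclically ordered around
   the centre; Q_G: vertices 'I_N, arrows alpha_i : i -> i+1 (mod N).
   (The star with one edge is the line with one edge, covered above.)      *)
Definition star_path N (i : 'I_N) (k : nat) : seq 'I_N :=
  mkseq (fun j => iter j (@ordS N) i) k.

Definition star_rels n : seq (seq (K * seq 'I_n.+2)) :=
  (* only relations of type C_v alpha_1; the other vertices are truncated
     and every composable alpha beta lies in the cycle *)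
  [seq [:: (1, star_path i n.+3)] | i <- enum 'I_n.+2].

Definition brauer_star (B : algType K) : Prop :=
  exists n : nat, exists (e : 'I_n.+2 -> B) (x : 'I_n.+2 -> B),
    presents (@id 'I_n.+2) (@ordS n.+2) (star_rels n) e x.

End Defs.

From HB Require Import structures.
From mathcomp Require Import all_boot all_order all_algebra all_field.
From mathcomp Require Import ring zify.
Set Implicit Arguments. Unset Strict Implicit. Unset Printing Implicit Defensive.
Import GRing.Theory.
Local Open Scope ring_scope.

(* The projection T(A) -> A is a surjective algebra map, so characters of A
   and representations of A by upper triangular 2 x 2 matrices pull back to
   any algebra B isomorphic to T(A).  For the monomial algebra A, each vertex
   v carries a character chi_v, and each arrow a : v -> w (v <> w) gives such
   a representation whose (1,2) entry is a (chi_v, chi_w)-derivation that is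
   not inner.  If B is presented by a quiver Q' without loops, its characters
   are the vertex characters of Q', and a derivation between the characters
   of two vertices j1, j2 of Q' is inner unless Q' has an arrow j1 -> j2.
   Hence Q, minus its loops, embeds into Q', and a D4 subquiver of Q yields
   a vertex of Q' with three distinct neighbours, which neither the Brauer
   line quiver nor the Brauer star quiver has. *)

Section UpperTriangular.
Variable K : fieldType.

(* Upper triangular 2 x 2 matrices [[a, b], [0, c]], stored as (a, b, c). *)
Definition utri : Type := (K^o * K^o * K^o)%type.
HB.instance Definition _ := GRing.Lmodule.copy utri (K^o * K^o * K^o)%type.

Definition UTri (a b c : K) : utri := (a, b, c).
Definition utri11 (p : utri) : K^o := p.1.1.
Definition utri12 (p : utri) : K := p.1.2.
Definition utri22 (p : utri) : K^o := p.2.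

Definition utri_mul (p q : utri) : utri :=
  UTri (utri11 p * utri11 q) (utri11 p * utri12 q + utri12 p * utri22 q)
       (utri22 p * utri22 q).

Lemma utri_mulA : associative utri_mul.
Proof. by move=> [[a b] c] [[d f] g] [[h i] j]; congr (_, _, _); cbn; ring. Qed.

Lemma utri_mul1 : left_id (UTri 1 0 1) utri_mul.
Proof. by move=> [[a b] c]; congr (_, _, _); cbn; ring. Qed.

Lemma utri_mulr1 : right_id (UTri 1 0 1) utri_mul.
Proof. by move=> [[a b] c]; congr (_, _, _); cbn; ring. Qed.

Lemma utri_mulDl : left_distributive utri_mul +%R.
Proof. by move=> [[a b] c] [[d f] g] [[h i] j]; congr (_, _, _); cbn; ring. Qed.

Lemma utri_mulDr : right_distributive utri_mul +%R.
Proof. by move=> [[a b] c] [[d f] g] [[h i] j]; congr (_, _, _); cbn; ring. Qed.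

Lemma utri_one_neq0 : UTri 1 0 1 != 0.
Proof. by apply/eqP => /(congr1 utri22) /eqP; rewrite oner_eq0. Qed.

HB.instance Definition _ := GRing.Zmodule_isNzRing.Build utri
  utri_mulA utri_mul1 utri_mulr1 utri_mulDl utri_mulDr utri_one_neq0.

Lemma utri_scaleAl (k : K) (p q : utri) : k *: (p * q) = (k *: p : utri) * q.
Proof.
by move: p q => [[a b] c] [[d f] g]; congr (_, _, _); cbn; ring.
Qed.

Lemma utri_scaleAr (k : K) (p q : utri) : k *: (p * q) = p * (k *: q : utri).
Proof.
by move: p q => [[a b] c] [[d f] g]; congr (_, _, _); cbn; ring.
Qed.

HB.instance Definition _ := GRing.Lmodule_isLalgebra.Build K utri utri_scaleAl.
HB.instance Definition _ := GRing.Lalgebra_isAlgebra.Build K utri utri_scaleAr.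

Lemma utriE (p : utri) : p = UTri (utri11 p) (utri12 p) (utri22 p).
Proof. by case: p => [[]]. Qed.

Lemma UTri_add a b c a' b' c' :
  UTri a b c + UTri a' b' c' = UTri (a + a') (b + b') (c + c').
Proof. by []. Qed.

Lemma UTri_scale k a b c : k *: UTri a b c = UTri (k * a) (k * b) (k * c).
Proof. by []. Qed.

Lemma UTri_mul a b c a' b' c' :
  UTri a b c * UTri a' b' c' = UTri (a * a') (a * b' + b * c') (c * c').
Proof. by []. Qed.

Lemma UTri1 : UTri 1 0 1 = 1.
Proof. by []. Qed.

Lemma utri12_mul (p q : utri) :
  utri12 (p * q) = utri11 p * utri12 q + utri12 p * utri22 q.
Proof. by []. Qed.

Lemma utri11_hom : alg_hom (utri11 : utri -> K^o).
Proof. by split. Qed.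

Lemma utri22_hom : alg_hom (utri22 : utri -> K^o).
Proof. by split. Qed.

(* The conjugate of the diagonal part of [p] by [[1, -mu], [0, 1]]. *)
Definition utri_inner (mu : K) (p : utri) : utri :=
  UTri (utri11 p) (mu * (utri11 p - utri22 p)) (utri22 p).

Lemma utri_inner_hom mu : alg_hom (utri_inner mu).
Proof.
split=> [k [[a b] c] [[d f] g] | [[a b] c] [[d f] g] |] /=.
- by rewrite /utri_inner UTri_scale UTri_add; congr UTri; cbn; ring.
- by rewrite /utri_inner UTri_mul; congr UTri; cbn; ring.
- by rewrite /utri_inner /= subrr mulr0.
Qed.

End UpperTriangular.

Arguments UTri {K}.
Arguments utri11_hom {K}.
Arguments utri22_hom {K}.

Section AlgHom.
Variables (K : fieldType) (B C : algType K) (f : B -> C).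
Hypothesis hom_f : alg_hom f.

Lemma alg_homD u v : f (u + v) = f u + f v.
Proof. by case: hom_f => lin _ _; have := lin 1 u v; rewrite !scale1r. Qed.

Lemma alg_hom0 : f 0 = 0.
Proof. by apply: (addrI (f 0)); rewrite -alg_homD !addr0. Qed.

Lemma alg_homZ k u : f (k *: u) = k *: f u.
Proof. by case: hom_f => lin _ _; rewrite -[k *: u]addr0 lin alg_hom0 addr0. Qed.

Lemma alg_homM u v : f (u * v) = f u * f v.
Proof. by case: hom_f. Qed.

Lemma alg_hom1 : f 1 = 1.
Proof. by case: hom_f. Qed.

Lemma alg_hom_rel (Ar : Type) (x : Ar -> B) r :
  f (rel_eval x r) = rel_eval (f \o x) r.
Proof.
rewrite /rel_eval (big_morph f alg_homD alg_hom0); apply: eq_bigr => c _.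
by rewrite alg_homZ /path_eval (big_morph f alg_homM alg_hom1).
Qed.

Lemma quiver_gens_comp (V Ar : finType) (s t : Ar -> V) e x :
  quiver_gens s t e x -> quiver_gens s t (f \o e) (f \o x).
Proof.
case=> [sum_e orth_e xP]; split=> [|i j|a] /=.
- by rewrite -(big_morph f alg_homD alg_hom0) sum_e alg_hom1.
- by rewrite -alg_homM orth_e; case: eqP; rewrite ?alg_hom0.
- by rewrite -!alg_homM -xP.
Qed.

Lemma rels_hold_comp (Ar : eqType) (x : Ar -> B) R :
  rels_hold x R -> rels_hold (f \o x) R.
Proof. by move=> xR r /xR; rewrite -alg_hom_rel => ->; rewrite alg_hom0. Qed.

End AlgHom.

Lemma alg_hom_comp (K : fieldType) (B C D : algType K) (f : B -> C) (g : C -> D) :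
  alg_hom f -> alg_hom g -> alg_hom (g \o f).
Proof.
move=> hom_f hom_g; split=> [k u v | u v |] /=.
- by rewrite (alg_homD hom_f) (alg_homZ hom_f) (alg_homD hom_g) (alg_homZ hom_g).
- by rewrite (alg_homM hom_f) (alg_homM hom_g).
- by rewrite (alg_hom1 hom_f) (alg_hom1 hom_g).
Qed.

Definition is_vertex_char (K : fieldType) (C : algType K) (V : eqType) (Ar : Type)
    (e : V -> C) (x : Ar -> C) (chi : C -> K^o) (v : V) : Prop :=
  [/\ alg_hom chi, forall w, chi (e w) = (w == v)%:R & forall a, chi (x a) = 0].

Section Presentation.
Variables (K : fieldType) (B : algType K) (W Br : finType) (sB tB : Br -> W).
Variables (RB : seq (seq (K * seq Br))) (eB : W -> B) (xB : Br -> B).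
Hypothesis presB : presents sB tB RB eB xB.

Lemma presents_hom_ext (C : algType K) (f g : B -> C) :
  alg_hom f -> alg_hom g -> (forall i, f (eB i) = g (eB i)) ->
  (forall b, f (xB b) = g (xB b)) -> f = g.
Proof.
case: presB => gensB relsB univB hom_f hom_g fgE fgX.
have [h [_ h_uniq]] := univB C (f \o eB) (f \o xB)
  (quiver_gens_comp hom_f gensB) (rels_hold_comp hom_f relsB).
by rewrite -(h_uniq f) ?(h_uniq g) //; split=> // [i | b] /=; rewrite ?fgE ?fgX.
Qed.

Lemma vertex_char_unique chi1 chi2 j :
  is_vertex_char eB xB chi1 j -> is_vertex_char eB xB chi2 j -> chi1 = chi2.
Proof.
case=> hom1 e1 x1 [hom2 e2 x2].
by apply: presents_hom_ext => // [i | b]; rewrite ?e1 ?e2 ?x1 ?x2.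
Qed.

Lemma loopless_char_vertex chi : (forall b, sB b != tB b) ->
  alg_hom chi -> exists j, is_vertex_char eB xB chi j.
Proof.
move=> loopless hom_chi; case: presB => gensB _ _.
have [/= sum_e orth_e chi_x] := quiver_gens_comp hom_chi gensB.
have [j chi_j] : exists j, chi (eB j) != 0.
  case: (pickP (fun j => chi (eB j) != 0)) => [j | all0]; first by exists j.
  move: sum_e; rewrite big1 => [/esym/eqP | i _]; first by rewrite oner_eq0.
  exact/eqP/negbFE/all0.
have chi_e k : chi (eB k) = (k == j)%:R.
  have := orth_e k j; have [-> | nkj] := eqVneq k j; rewrite ?eqxx => orth.
    by apply: (mulfI chi_j); rewrite mulr1.
  by apply: (mulIf chi_j); rewrite mul0r.
exists j; split=> // b; rewrite chi_x !chi_e.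
have [sj | _] := eqVneq (sB b) j; last by rewrite !mul0r.
have [tj | _] := eqVneq (tB b) j; last by rewrite mulr0.
by move: (loopless b); rewrite sj tj eqxx.
Qed.

(* The (1,2) entry of [g] is a derivation between the characters on the
   diagonal; it is inner when no arrow goes from [j1] to [j2]. *)
Lemma utri_hom_inner (g : B -> utri K) j1 j2 :
  alg_hom g -> j1 != j2 ->
  is_vertex_char eB xB (@utri11 K \o g) j1 ->
  is_vertex_char eB xB (@utri22 K \o g) j2 ->
  (forall b, ~ (sB b = j1 /\ tB b = j2)) ->
  g = utri_inner (utri12 (g (eB j1))) \o g.
Proof.
move=> hom_g j12 [_ /= g11_e /= g11_x] [_ /= g22_e /= g22_x] no_arrow.
have [gensB _ _] := presB; have [_ /= orth_e g_x] := quiver_gens_comp hom_g gensB.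
apply: presents_hom_ext => // [|i|b]; first exact/alg_hom_comp/utri_inner_hom.
- rewrite /= [LHS]utriE /utri_inner g11_e g22_e; congr UTri.
  have [-> | ij1] := eqVneq i j1.
    by rewrite (negbTE j12) mulr1n mulr0n subr0 mulr1.
  have [-> | ij2] := eqVneq i j2; last first.
    have := congr1 (@utri12 K) (orth_e i i); rewrite eqxx utri12_mul g11_e g22_e.
    by rewrite (negbTE ij1) (negbTE ij2) !mulr0n !mul0r mulr0 add0r subrr mulr0.
  have := congr1 (@utri12 K) (orth_e j1 j2); rewrite (negbTE j12) utri12_mul.
  rewrite g11_e g22_e !eqxx mulr1n mulr0n mul1r mulr1 sub0r mulrN1.
  by move=> /eqP; rewrite addr_eq0 => /eqP.
- rewrite /= [LHS]utriE /utri_inner g11_x g22_x subrr mulr0; congr UTri.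
  have := congr1 (@utri12 K) (g_x b).
  rewrite !utri12_mul (alg_homM utri11_hom) g11_e g22_e g11_x g22_x.
  rewrite !mulr0 mul0r !add0r addr0.
  have [sj | _] := eqVneq (sB b) j1; last by rewrite mulr0n !mul0r.
  have [tj | _] := eqVneq (tB b) j2; last by rewrite mulr0n mulr0.
  by case: (no_arrow b).
Qed.

End Presentation.

Lemma natr_eqb_mul (R : pzSemiRingType) (T : eqType) (i j p : T) :
  ((i == p)%:R * (j == p)%:R : R) = if i == j then (i == p)%:R else 0.
Proof.
have [-> | nij] := eqVneq i j.
  by case: (j == p); rewrite ?mulr1n ?mulr0n ?mulr1 ?mulr0.
have [ip | _] := eqVneq i p; last by rewrite mulr0n mul0r.
by rewrite -ip eq_sym (negbTE nij) mulr0n mulr0.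
Qed.

Section Monomial.
Variables (K : fieldType) (A : algType K) (V Ar : finType) (s t : Ar -> V).
Variables (Rq : seq (Ar * Ar)) (e : V -> A) (x : Ar -> A).
Hypothesis presA : presents s t (monomial_rels K Rq) e x.

Lemma monomial_rels_hold (C : algType K) (y : Ar -> C) :
  (forall a b, y a * y b = 0) -> rels_hold y (monomial_rels K Rq).
Proof.
move=> y0 r /mapP [p _ ->]; rewrite /rel_eval /path_eval !big_cons !big_nil /=.
by rewrite mulr1 y0 scaler0 addr0.
Qed.

Lemma monomial_vertex_char v : exists chi, is_vertex_char e x chi v.
Proof.
case: presA => _ _ univA.
have gens : quiver_gens s t (fun w => (w == v)%:R : K^o) (fun _ => 0 : K^o).
  split=> [|i j|a]; last by rewrite mulr0 mul0r.
    by rewrite (bigD1 v) //= eqxx big1 ?addr0 // => w /negbTE ->.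
  exact: natr_eqb_mul.
have [chi [chiP _]] := univA _ _ _ gens (monomial_rels_hold (fun _ _ => mulr0 0)).
by exists chi.
Qed.

Lemma monomial_arrow_utri_hom a : s a != t a ->
  exists h : A -> utri K, [/\ alg_hom h,
    is_vertex_char e x (@utri11 K \o h) (s a),
    is_vertex_char e x (@utri22 K \o h) (t a) & h (x a) = UTri 0 1 0].
Proof.
case: presA => _ _ univA st.
pose hE w : utri K := UTri (w == s a)%:R 0 (w == t a)%:R.
pose hX b : utri K := UTri 0 (b == a)%:R 0.
have gens : quiver_gens s t hE hX.
  split=> [|i j|b].
  - rewrite (bigD1 (s a)) //= (bigD1 (t a)) /=; last by rewrite eq_sym st.
    rewrite big1 => [|w /andP [/negbTE ws /negbTE wt]]; last by rewrite /hE ws wt.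
    rewrite /hE !eqxx (negbTE st) eq_sym (negbTE st) addr0 UTri_add -UTri1.
    by congr UTri; rewrite ?mulr1n ?mulr0n; ring.
  - by rewrite UTri_mul !natr_eqb_mul mulr0 mul0r addr0; case: (i == j).
  - rewrite /hE /hX !UTri_mul !mulr0 !mul0r !addr0; congr UTri => /=.
    rewrite add0r; have [-> | _] := eqVneq b a; last by rewrite mulr0n mulr0 mul0r.
    by rewrite !eqxx mulr1n mul1r mulr1.
have hX_sq0 b b' : hX b * hX b' = 0 by rewrite UTri_mul !mul0r mulr0 addr0.
have [h [[hom_h h_e h_x] _]] := univA _ _ _ gens (monomial_rels_hold hX_sq0).
exists h; split=> //; last by rewrite h_x /hX eqxx.
- split=> [|w|b] /=; last by rewrite h_x.
    exact: alg_hom_comp hom_h utri11_hom.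
  by rewrite h_e.
- split=> [|w|b] /=; last by rewrite h_x.
    exact: alg_hom_comp hom_h utri22_hom.
  by rewrite h_e.
Qed.

End Monomial.

Lemma has_D4_subquiver_embedding (V W Ar Br : finType) (s t : Ar -> V)
    (sB tB : Br -> W) (J : V -> W) :
  injective J ->
  (forall a, s a != t a -> exists b, sB b = J (s a) /\ tB b = J (t a)) ->
  has_D4_subquiver s t -> has_D4_subquiver sB tB.
Proof.
move=> J_inj J_arrow [c [u1 [u2 [u3 [a1 [a2 [a3 [cu a1E a2E a3E]]]]]]]].
have edge a u : c != u -> (s a, t a) = (c, u) \/ (s a, t a) = (u, c) ->
    exists b, (sB b, tB b) = (J c, J u) \/ (sB b, tB b) = (J u, J c).
  move=> cu' [[sa ta] | [sa ta]].
    have [|b [sb tb]] := J_arrow a; first by rewrite sa ta.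
    by exists b; left; rewrite sb tb sa ta.
  have [|b [sb tb]] := J_arrow a; first by rewrite sa ta eq_sym.
  by exists b; right; rewrite sb tb sa ta.
move: (cu); rewrite /= !inE !negb_or => /andP [/and3P [cu1 cu2 cu3] _].
have [b1 b1E] := edge a1 u1 cu1 a1E; have [b2 b2E] := edge a2 u2 cu2 a2E.
have [b3 b3E] := edge a3 u3 cu3 a3E.
exists (J c), (J u1), (J u2), (J u3), b1, b2, b3; split=> //.
by rewrite -[[:: J c; _; _; _]]/(map J [:: c; u1; u2; u3]) map_inj_uniq.
Qed.

Section Quotient.
Variables (K : fieldType) (A B : algType K).
Variables (V Ar : finType) (s t : Ar -> V) (Rq : seq (Ar * Ar)).
Variables (e : V -> A) (x : Ar -> A).
Variables (W Br : finType) (sB tB : Br -> W) (RB : seq (seq (K * seq Br))).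
Variables (eB : W -> B) (xB : Br -> B).
Hypothesis presA : presents s t (monomial_rels K Rq) e x.
Hypothesis presB : presents sB tB RB eB xB.
Hypothesis loopless : forall b, sB b != tB b.
Variable F : B -> A.
Hypotheses (hom_F : alg_hom F) (F_surj : forall u, exists z, F z = u).

Lemma quotient_vertex_char chi v :
  is_vertex_char e x chi v -> exists j, is_vertex_char eB xB (chi \o F) j.
Proof.
move=> [hom_chi _ _].
exact: (loopless_char_vertex presB loopless (alg_hom_comp hom_F hom_chi)).
Qed.

Lemma quotient_vertex_inj chi1 chi2 v w j :
  is_vertex_char e x chi1 v -> is_vertex_char e x chi2 w ->
  is_vertex_char eB xB (chi1 \o F) j -> is_vertex_char eB xB (chi2 \o F) j -> v = w.
Proof.
move=> [_ chi1_e _] [_ chi2_e _] char1 char2; have [z Fz] := F_surj (e v).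
have := congr1 (fun chi => chi z) (vertex_char_unique presB char1 char2).
rewrite /= Fz chi1_e chi2_e eqxx; case: eqVneq => // _ /eqP.
by rewrite mulr0n oner_eq0.
Qed.

Lemma quotient_arrow a chi1 chi2 j1 j2 : s a != t a ->
  is_vertex_char e x chi1 (s a) -> is_vertex_char e x chi2 (t a) ->
  is_vertex_char eB xB (chi1 \o F) j1 -> is_vertex_char eB xB (chi2 \o F) j2 ->
  exists b, sB b = j1 /\ tB b = j2.
Proof.
move=> st char1 char2 charB1 charB2.
have [h [hom_h h11 h22 h_a]] := monomial_arrow_utri_hom presA st.
have g11 : is_vertex_char eB xB ((@utri11 K \o h) \o F) j1.
  by rewrite (vertex_char_unique presA h11 char1).
have g22 : is_vertex_char eB xB ((@utri22 K \o h) \o F) j2.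
  by rewrite (vertex_char_unique presA h22 char2).
have j12 : j1 != j2.
  apply: contra st => /eqP j12; apply/eqP.
  by apply: (quotient_vertex_inj char1 char2 charB1); rewrite j12.
have [/existsP [b /andP [/eqP sb /eqP tb]] | /existsPn no_arrow] :=
  boolP [exists b, (sB b == j1) && (tB b == j2)]; first by exists b.
have {}no_arrow b : ~ (sB b = j1 /\ tB b = j2).
  by case=> sb tb; move: (no_arrow b); rewrite sb tb !eqxx.
have E := utri_hom_inner presB (alg_hom_comp hom_F hom_h) j12 g11 g22 no_arrow.
have [z Fz] := F_surj (x a).
move: (congr1 (fun g => utri12 (g z)) E); rewrite /= Fz h_a /utri_inner /=.
by rewrite subrr mulr0 => /eqP; rewrite oner_eq0.
Qed.

Lemma quotient_quiver_embedding :
  exists J : V -> W, injective J /\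
    forall a, s a != t a -> exists b, sB b = J (s a) /\ tB b = J (t a).
Proof.
have [chi chiP] := fin_all_exists (monomial_vertex_char presA).
have [J JP] := fin_all_exists (fun v => quotient_vertex_char (chiP v)).
exists J; split=> [v w Jvw | a st].
  by apply: (quotient_vertex_inj (chiP v) (chiP w) (JP v)); rewrite Jvw.
exact: quotient_arrow st (chiP _) (chiP _) (JP _) (JP _).
Qed.

Lemma quotient_has_D4_subquiver :
  has_D4_subquiver s t -> has_D4_subquiver sB tB.
Proof.
have [J [J_inj J_arrow]] := quotient_quiver_embedding.
exact: has_D4_subquiver_embedding J_inj J_arrow.
Qed.

End Quotient.

Lemma iso_triv_ext_quotient (K : fieldType) (A : falgType K) (B : algType K) :
  iso_triv_ext A B -> exists F : B -> A, alg_hom F /\ forall u, exists z, F z = u.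
Proof.
case=> phi [[psi phiK psiK] phi_lin phi_mul phi1].
exists (fun z => (psi z).1); split=> [|u]; last by exists (phi (u, 0)); rewrite phiK.
split=> [k u v | u v |].
- suff -> : psi (k *: u + v) = k *: psi u + psi v by [].
  by apply: (can_inj phiK); rewrite psiK phi_lin !psiK.
- suff -> : psi (u * v) = triv_mul (psi u) (psi v) by [].
  by apply: (can_inj phiK); rewrite psiK phi_mul !psiK.
- suff -> : psi 1 = (1, 0) by [].
  by apply: (can_inj phiK); rewrite psiK phi1.
Qed.

(* Seen through [g], a vertex [c] has at most two neighbours: [f (g c)] and
   the [f]-preimage of [g c]. *)
Lemma no_D4_subquiver_succ (W Br : finType) (sB tB : Br -> W) (T : eqType)
    (g : W -> T) (f : T -> T) :
  injective g -> injective f ->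
  (forall b, f (g (sB b)) = g (tB b) \/ f (g (tB b)) = g (sB b)) ->
  ~ has_D4_subquiver sB tB.
Proof.
move=> g_inj f_inj adj [c [u1 [u2 [u3 [a1 [a2 [a3 [cu a1E a2E a3E]]]]]]]].
pose above u := g u == f (g c).
have nbr a u : (sB a, tB a) = (c, u) \/ (sB a, tB a) = (u, c) ->
    above u \/ f (g u) = g c.
  by rewrite /above; case=> -[<- <-]; case: (adj a) => ->; rewrite ?eqxx; auto.
have nbr_eq u v : above u \/ f (g u) = g c -> above v \/ f (g v) = g c ->
    above u = above v -> u = v.
  move=> nu nv uv; apply: g_inj; case: nu => [/eqP gu | gu].
    by move: uv; rewrite /above gu eqxx => /esym/eqP.
  case: nv => [/eqP gv | gv]; last by apply: f_inj; rewrite gu gv.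
  by move: uv; rewrite /above gv eqxx => /eqP; rewrite -gv.
have n1 := nbr _ _ a1E; have n2 := nbr _ _ a2E; have n3 := nbr _ _ a3E.
have : [|| above u1 == above u2, above u1 == above u3 | above u2 == above u3].
  by case: (above u1); case: (above u2); case: (above u3).
by case/or3P => /eqP /nbr_eq E; move: cu;
  rewrite ?(E n1 n2) ?(E n1 n3) ?(E n2 n3) /= !inE !eqxx ?orbT ?andbF.
Qed.

Lemma line_adj n (b : bool * 'I_n) :
  (line_s b).+1 = line_t b \/ (line_t b).+1 = line_s b.
Proof. by case: b => [[] i]; [left | right]; rewrite /= /bump leq0n add1n. Qed.

Lemma line_loopless n (b : bool * 'I_n) : line_s b != line_t b.
Proof. by apply/eqP => st; case: (line_adj b); rewrite st; lia. Qed.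

Lemma line_no_D4_subquiver n : ~ has_D4_subquiver (@line_s n) (@line_t n).
Proof. exact: no_D4_subquiver_succ (@ord_inj n.+1) succn_inj (@line_adj n). Qed.

Lemma star_loopless n (i : 'I_n.+2) : id i != ordS i.
Proof.
apply/eqP => /(congr1 val) /=.
have := ltn_ord i; case: (ltngtP i.+1 n.+2) => [lt_i | gt_i | eq_i] le_i.
- by rewrite modn_small //; lia.
- lia.
- by rewrite eq_i modnn; lia.
Qed.

Lemma star_no_D4_subquiver n : ~ has_D4_subquiver (@id 'I_n.+2) (@ordS n.+2).
Proof. by apply: no_D4_subquiver_succ (@inj_id _) (@ordS_inj _) _ => b; left. Qed.

Theorem lemma3p5 (K : closedFieldType) (A : falgType K)
    (V Ar : finType) (s t : Ar -> V) (Rq : seq (Ar * Ar))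
    (e : V -> A) (x : Ar -> A) :
  gentle_presentation s t Rq e x ->
  has_D4_subquiver s t ->
  forall B : algType K, iso_triv_ext A B -> ~ brauer_line B /\ ~ brauer_star B.
Proof.
move=> [presA _ _ _ _] D4 B /iso_triv_ext_quotient [F [hom_F F_surj]].
split=> -[n [eB [xB presB]]].
- apply: (@line_no_D4_subquiver n).
  exact: (quotient_has_D4_subquiver presA presB (@line_loopless n) hom_F F_surj D4).
- apply: (@star_no_D4_subquiver n).
  exact: (quotient_has_D4_subquiver presA presB (@star_loopless n) hom_F F_surj D4).
Qed.
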